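(* Let $m\geq 15$ and $k\geq 1$ be integers and let $c(x)=1+\sum_{j\in\{2,3,4,7\}}(x^j+x^{m-j})\in\mathbb{F}_2[x]$. Then $\gcd(c(x^k),x^m-1)=1$ if and only if $\gcd(m,3k)=\gcd(m,5k)=\gcd(m,k)$.
   Context: All polynomials are over $\mathbb{F}_2$. *)

From HB Require Import structures.
From mathcomp Require Import all_boot all_order all_algebra.
Set Implicit Arguments. Unset Strict Implicit. Unset Printing Implicit Defensive.
Import GRing.Theory.
Local Open Scope ring_scope.

Definition cpoly (m : nat) : {poly 'F_2} :=
  1 + \sum_(j <- [:: 2%N; 3%N; 4%N; 7%N]) ('X^j + 'X^(m - j)).

From HB Require Import structures.
From mathcomp Require Import all_boot all_order all_algebra.
From mathcomp Require Import ring.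
Set Implicit Arguments.
Unset Strict Implicit.
Unset Printing Implicit Defensive.
Import GRing.Theory.
Local Open Scope ring_scope.

(* Proof of Proposition 6.  Write y = x^k, M = x^m - 1, A = 1 + y + y^2 and
   B = 1 + y + y^2 + y^3 + y^4.  Over a ring of characteristic 2 one has the
   polynomial identity
       y^7 c(y) = A B^3 + (y^m - 1) (y^5 + y^4 + y^3 + 1),
   where y^(m-j) has been written y^(m-7) y^(7-j).  Since M divides
   y^m - 1 = x^(km) - 1 and x is coprime to M, c(y) is coprime to M iff A and
   B are.  For a geometric sum G_d = 1 + y + ... + y^(d-1) with d odd (hence
   invertible in F_2) we have (y - 1) G_d = x^(dk) - 1 and G_d is coprime to
   y - 1; together with gcd(x^a - 1, x^b - 1) = x^gcd(a,b) - 1 this shows that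
   G_d is coprime to M iff gcd(m, dk) = gcd(m, k).  Taking d = 3 and d = 5
   gives the theorem (only m >= 7 is actually needed). *)

(* A geometric sum 1 + p + ... + p^(d-1) is congruent to d modulo p - 1, so it
   is coprime to p - 1 whenever d is nonzero in the field. *)
Lemma geom_sum_coprime (F : fieldType) (p : {poly F}) (d : nat) :
  d%:R != 0 :> F -> coprimep (\sum_(i < d) p ^+ i) (p - 1).
Proof.
move=> d_neq0.
have -> : \sum_(i < d) p ^+ i = (\sum_(i < d) \sum_(j < i) p ^+ j) * (p - 1) + d%:R.
  apply/esym; rewrite mulr_suml.
  under eq_bigr => i _ do rewrite mulrC -subrX1.
  by rewrite sumrB sumr_const card_ord subrK.
rewrite coprimep_sym coprimep_addl_mul -polyC_natr -[_%:P]mulr1 mul_polyC.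
by rewrite coprimepZr // coprimep1.
Qed.

(* gcd(x^a - 1, x^b - 1) = x^gcd(a,b) - 1, by the Euclidean algorithm on the
   exponents: x^a - 1 = q (x^b - 1) + (x^(a mod b) - 1). *)
Lemma gcdp_Xn_sub1 (F : fieldType) (a b : nat) :
  gcdp ('X^a - 1 : {poly F}) ('X^b - 1) %= 'X^(gcdn a b) - 1.
Proof.
elim/ltn_ind: b a => -[|b] IH a.
  by rewrite expr0 subrr gcdp0 gcdn0 eqpxx.
set c := (a %% b.+1)%N.
have -> : ('X^a - 1 : {poly F}) =
    ('X^c * \sum_(i < a %/ b.+1) ('X^(b.+1)) ^+ i) * ('X^(b.+1) - 1) + ('X^c - 1).
  rewrite -mulrA [_ * ('X^_ - 1)]mulrC -subrX1 -exprM mulrBr mulr1 -exprD.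
  by rewrite addrA subrK addnC mulnC -divn_eq.
rewrite (eqp_trans (gcdpC _ _)) // (eqp_trans (gcdp_addl_mul _ _ _)) //.
by rewrite -gcdn_modl gcdnC IH // ltn_pmod.
Qed.

Lemma eqp_Xn_sub1 (F : fieldType) (a b : nat) : (0 < a)%N -> (0 < b)%N ->
  ('X^a - 1 : {poly F}) %= 'X^b - 1 = (a == b).
Proof.
move=> a_gt0 b_gt0; apply/idP/eqP => [/eqp_size | ->]; last exact: eqpxx.
by rewrite !size_Xn_sub_1 // => -[].
Qed.

Lemma coprimep_gcdpM (F : fieldType) (P Q M : {poly F}) :
  coprimep P Q -> coprimep P M = (gcdp M (Q * P) %= gcdp M Q).
Proof.
move=> cPQ; apply/idP/idP => [cPM | eq_gcd].
  by apply: Gauss_gcdpl; rewrite coprimep_sym.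
apply/coprimepP => h hP hM; apply: (coprimepP _ _ cPQ) => //.
have : h %| gcdp M (Q * P) by rewrite dvdp_gcd hM dvdp_mull.
by rewrite (eqp_dvdr _ eq_gcd) => /dvdp_trans; apply; apply: dvdp_gcdr.
Qed.

Lemma coprimep_geom_sum_Xn (F : fieldType) (k d m : nat) :
  (0 < m)%N -> d%:R != 0 :> F ->
  coprimep (\sum_(i < d) ('X^k : {poly F}) ^+ i) ('X^m - 1) <->
  gcdn m (d * k) = gcdn m k.
Proof.
move=> m_gt0 d_neq0.
have cop := geom_sum_coprime 'X^k d_neq0.
have gcd_pos (n : nat) : (0 < gcdn m n)%N by rewrite gcdn_gt0 m_gt0.
rewrite (coprimep_gcdpM _ cop) -subrX1 -exprM mulnC.
rewrite (eqp_ltrans (gcdp_Xn_sub1 _ _ _)) (eqp_rtrans (gcdp_Xn_sub1 _ _ _)).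
by rewrite eqp_Xn_sub1 //; split => /eqP.
Qed.

Lemma coprimep_add_dvd (F : fieldType) (p q M : {poly F}) :
  M %| q -> coprimep (p + q) M = coprimep p M.
Proof.
by move=> /dvdpP [r ->]; rewrite addrC coprimep_sym coprimep_addl_mul coprimep_sym.
Qed.

(* x^k is coprime to x^m - 1 for m > 0, since 0 is not a root of x^m - 1. *)
Lemma coprimep_Xn_Xn_sub1 (F : fieldType) (k m : nat) :
  (0 < m)%N -> coprimep ('X^k : {poly F}) ('X^m - 1).
Proof.
move=> m_gt0; apply: coprimep_expl.
by rewrite coprimep_sym coprimepX /root !hornerE expr0n gtn_eqF // sub0r oppr_eq0 oner_eq0.
Qed.

Lemma cpoly_comp (n : nat) (p : {poly 'F_2}) :
  cpoly (n + 7) \Po p = 1 + ((p^+2 + p^+n * p^+5) + ((p^+3 + p^+n * p^+4) +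
                        ((p^+4 + p^+n * p^+3) + (p^+7 + p^+n)))).
Proof.
rewrite /cpoly !big_cons big_nil addr0 !comp_polyD !comp_Xn_poly.
rewrite -polyC1 comp_polyC -!exprD.
by rewrite addnK -!addnBA.
Qed.

(* The key identity y^7 c(y) = A B^3 + (w y^7 - 1)(y^5 + y^4 + y^3 + 1) in
   characteristic 2, where w stands for y^(m-7); it holds in every commutative
   ring up to twice an explicit polynomial. *)
Lemma cpoly_identity (R : comPzRingType) (y w : R) : 2 = 0 :> R ->
  y^+7 * (1 + ((y^+2 + w * y^+5) + ((y^+3 + w * y^+4) +
          ((y^+4 + w * y^+3) + (y^+7 + w))))) =
  (\sum_(i < 3) y ^+ i) * (\sum_(i < 5) y ^+ i) ^+ 3 +
  (w * y^+7 - 1) * (y^+5 + y^+4 + y^+3 + 1).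
Proof.
move=> two0; rewrite !big_ord_recr big_ord0 /= !add0r.
rewrite -[RHS]subr0 -(mul0r (2*y + 5*y^+2 + 9*y^+3 + 15*y^+4 + 21*y^+5 + 26*y^+6
  + 27*y^+7 + 26*y^+8 + 21*y^+9 + 15*y^+10 + 9*y^+11 + 5*y^+12 + 2*y^+13)) -two0.
ring.
Qed.

Theorem proposition6 (m k : nat) (hm : (15 <= m)%N) (hk : (1 <= k)%N) :
  coprimep (cpoly m \Po 'X^k) ('X^m - 1 : {poly 'F_2}) <->
  (gcdn m (3 * k) = gcdn m k /\ gcdn m (5 * k) = gcdn m k).
Proof.
have m_gt0 : (0 < m)%N by apply: leq_trans hm.
have [n em] : exists n, m = (n + 7)%N by exists (m - 7)%N; rewrite subnK // (leq_trans _ hm).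
set y : {poly 'F_2} := 'X^k.
set M : {poly 'F_2} := 'X^m - 1.
have two0 : 2 = 0 :> {poly 'F_2} by rewrite -polyC_natr; congr polyC; apply/eqP.
(* Multiplying by the unit y^7 modulo M does not change coprimality. *)
have -> : coprimep (cpoly m \Po y) M = coprimep (y ^+ 7 * (cpoly m \Po y)) M.
  by rewrite coprimepMl /y -exprM coprimep_Xn_Xn_sub1.
(* y^7 c(y) = A B^3 + (y^m - 1) T, and M divides y^m - 1 = x^(km) - 1. *)
rewrite em cpoly_comp cpoly_identity // -exprD -em coprimep_add_dvd; last first.
  by rewrite dvdp_mulr // /y -exprM mulnC exprM subrX1 dvdp_mulr.
rewrite coprimepMl coprimep_pexpl //.
rewrite -(coprimep_geom_sum_Xn k m_gt0 (_ : 3%:R != 0 :> 'F_2)) //.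
rewrite -(coprimep_geom_sum_Xn k m_gt0 (_ : 5%:R != 0 :> 'F_2)) //.
by split => [/andP | [-> ->]].
Qed.
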